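(* Let $\delta>0$, $L=3/(4\delta)$ and $\tilde L=(1+\epsilon)L$ with $\epsilon=10^{-6}$. Let data $(\mathbf{x}_i,y_i)$, $i=1,\dots,n$, with $\mathbf{x}_i=(x_{i1},\dots,x_{ip})\in\mathbb{R}^p$, $y_i\in\{-1,1\}$, be standardized so that $\frac1n\sum_i x_{ij}=0$ and $\frac1n\sum_i x_{ij}^2=1$ for every $j$. Fix $\tilde\beta_0,\tilde{\boldsymbol\beta}$, set $r_i=y_i(\tilde\beta_0+\mathbf{x}_i^\top\tilde{\boldsymbol\beta})$, fix $j$, and let $P$ be any real-valued function of $\beta_j$ (the penalty). Define $$F(\beta_j)=\frac1n\sum_{i=1}^n B_\delta\big(r_i+y_ix_{ij}(\beta_j-\tilde\beta_j)\big)+P(\beta_j),$$ $$Q(\beta_j)=\frac{1}{n}\sum_{i=1}^n B_\delta(r_i)+\frac{1}{n}\sum_{i=1}^n B_\delta'(r_i)y_ix_{ij}(\beta_j-\tilde\beta_j)+\frac{\tilde L}{2}(\beta_j-\tilde\beta_j)^2+P(\beta_j).$$ Then $F(\beta_j)=Q(\beta_j)$ if $\beta_j=\tilde\beta_j$, and $F(\beta_j)<Q(\beta_j)$ if $\beta_j\neq\tilde\beta_j$.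
   Context: $B_\delta$ (the BernSVM loss) is defined by $B_\delta(t)=(1-t)_+$ if $|t-1|>\delta$ and $B_\delta(t)=g_\delta(t)=\frac{1}{8\delta^{3}}\{\frac{(1-t+\delta)^{4}}{2}-(1-t-\delta)(1-t+\delta)^{3}\}$ if $|t-1|\le\delta$; it is twice continuously differentiable. *)

From Stdlib Require Import Reals Lra.
From Coquelicot Require Import Coquelicot.
Open Scope R_scope.

Fixpoint sumR (n : nat) (f : nat -> R) : R :=
  match n with
  | O => 0
  | S m => sumR m f + f m
  end.

Definition g_delta (delta t : R) : R :=
  / (8 * delta ^ 3) *
  ((1 - t + delta) ^ 4 / 2 - (1 - t - delta) * (1 - t + delta) ^ 3).

Definition Bern (delta t : R) : R :=
  if Rle_dec (Rabs (t - 1)) delta then g_delta delta t else Rmax (1 - t) 0.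

Definition Bern' (delta t : R) : R := Derive (Bern delta) t.

Definition eps_L : R := / 1000000.

(* B_delta is C^2 with B_delta'' <= L = 3/(4 delta): the second derivative vanishes
   outside the band |t - 1| <= delta and equals 3 (delta^2 - (1-t)^2) / (4 delta^3)
   inside it.  Taylor's formula with Lagrange remainder thus gives
   B_delta(u + h) <= B_delta(u) + B_delta'(u) h + L/2 h^2.  Taking h = y_i x_ij d with
   d = beta_j - tilde beta_j, we have h^2 = x_ij^2 d^2 since y_i^2 = 1, and averaging
   over i with (1/n) sum_i x_ij^2 = 1 yields F <= Q - (tilde L - L)/2 d^2. *)

From Stdlib Require Import Reals Lra Lia.
From Coquelicot Require Import Coquelicot.
Open Scope R_scope.

Lemma is_derive_glue (f g h : R -> R) a l eta : 0 < eta ->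
  (forall t, a - eta < t <= a -> f t = g t) ->
  (forall t, a <= t < a + eta -> f t = h t) ->
  is_derive g a l -> is_derive h a l -> is_derive f a l.
Proof.
  intros Heta Hg Hh Dg Dh.
  apply is_derive_Reals in Dg, Dh; apply is_derive_Reals.
  intros e He.
  destruct (Dg e He) as [d1 H1], (Dh e He) as [d2 H2].
  assert (Hd : 0 < Rmin eta (Rmin d1 d2)).
  { apply Rmin_pos; [lra | apply Rmin_pos; apply cond_pos]. }
  exists (mkposreal _ Hd); simpl; intros k Hk0 Hk.
  pose proof (Rmin_l eta (Rmin d1 d2)); pose proof (Rmin_r eta (Rmin d1 d2)).
  pose proof (Rmin_l d1 d2); pose proof (Rmin_r d1 d2).
  assert (Hketa : Rabs k < eta) by lra.
  apply Rabs_def2 in Hketa.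
  destruct (Rle_lt_dec k 0).
  - rewrite (Hg (a + k)), (Hg a) by lra; apply H1; auto; lra.
  - rewrite (Hh (a + k)), (Hh a) by lra; apply H2; auto; lra.
Qed.

Definition piecewise3 (a b : R) (f1 f2 f3 : R -> R) (t : R) : R :=
  if Rlt_dec t a then f1 t else if Rle_dec t b then f2 t else f3 t.

Lemma piecewise3_left a b f1 f2 f3 t :
  a <= b -> f1 a = f2 a -> t <= a -> piecewise3 a b f1 f2 f3 t = f1 t.
Proof.
  intros Hab E Ht; unfold piecewise3.
  destruct Rlt_dec; [easy|]; destruct Rle_dec; [|lra].
  now replace t with a by lra.
Qed.

Lemma piecewise3_mid a b f1 f2 f3 t :
  a <= t <= b -> piecewise3 a b f1 f2 f3 t = f2 t.
Proof.
  intros Ht; unfold piecewise3.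
  destruct Rlt_dec; [lra|]; destruct Rle_dec; [easy|lra].
Qed.

Lemma piecewise3_right a b f1 f2 f3 t :
  a <= b -> f2 b = f3 b -> b <= t -> piecewise3 a b f1 f2 f3 t = f3 t.
Proof.
  intros Hab E Ht; unfold piecewise3.
  destruct Rlt_dec; [lra|]; destruct Rle_dec; [|easy].
  now replace t with b by lra.
Qed.

Section Piecewise3.
Variables (a b : R) (f1 f2 f3 df1 df2 df3 : R -> R).
Hypothesis Hab : a < b.
Hypotheses (D1 : forall t, is_derive f1 t (df1 t))
  (D2 : forall t, is_derive f2 t (df2 t)) (D3 : forall t, is_derive f3 t (df3 t)).
Hypotheses (Ea : f1 a = f2 a) (Eb : f2 b = f3 b)
  (dEa : df1 a = df2 a) (dEb : df2 b = df3 b).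

Lemma is_derive_piecewise3 t :
  is_derive (piecewise3 a b f1 f2 f3) t (piecewise3 a b df1 df2 df3 t).
Proof.
  destruct (Rlt_le_dec t a) as [Hta | Hat].
  { rewrite piecewise3_left by (auto; lra).
    apply (is_derive_glue _ f1 f1 t _ (a - t)); auto; try lra;
      intros s Hs; apply piecewise3_left; auto; lra. }
  destruct (Rlt_le_dec b t) as [Hbt | Htb].
  { rewrite piecewise3_right by (auto; lra).
    apply (is_derive_glue _ f3 f3 t _ (t - b)); auto; try lra;
      intros s Hs; apply piecewise3_right; auto; lra. }
  rewrite piecewise3_mid by lra.
  destruct (Req_dec t a) as [-> | Hta'].
  { apply (is_derive_glue _ f1 f2 a _ (b - a)); auto; try lra.
    - intros s Hs; apply piecewise3_left; auto; lra.
    - intros s Hs; apply piecewise3_mid; lra.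
    - now rewrite <- dEa. }
  destruct (Req_dec t b) as [-> | Htb'].
  { apply (is_derive_glue _ f2 f3 b _ (b - a)); auto; try lra.
    - intros s Hs; apply piecewise3_mid; lra.
    - intros s Hs; apply piecewise3_right; auto; lra.
    - now rewrite dEb. }
  pose proof (Rmin_l (t - a) (b - t)); pose proof (Rmin_r (t - a) (b - t)).
  apply (is_derive_glue _ f2 f2 t _ (Rmin (t - a) (b - t))); auto.
  - apply Rmin_pos; lra.
  - intros s Hs; apply piecewise3_mid; lra.
  - intros s Hs; apply piecewise3_mid; lra.
Qed.

End Piecewise3.

Lemma quadratic_upper_bound_lt (f df ddf : R -> R) L x y :
  (forall t, is_derive f t (df t)) -> (forall t, is_derive df t (ddf t)) ->
  (forall t, ddf t <= L) -> x < y ->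
  f y <= f x + df x * (y - x) + L / 2 * (y - x) ^ 2.
Proof.
  intros Df Ddf ddf_le Hxy.
  assert (Derive_f : forall t, Derive f t = df t) by (intro; apply is_derive_unique, Df).
  destruct (Taylor_Lagrange f 1 x y Hxy) as [z [_ ->]].
  { intros t _ [|[|[|k]]] Hk; simpl; auto; [| |lia].
    - exists (df t); apply Df.
    - exists (ddf t); apply (is_derive_ext df); auto. }
  assert (Derive2_f : Derive_n f 2 z = ddf z).
  { simpl; rewrite (Derive_ext (fun t => Derive (fun s => f s) t) df z Derive_f).
    apply is_derive_unique, Ddf. }
  simpl sum_f_R0; rewrite Derive2_f; simpl Derive_n; rewrite Derive_f.
  pose proof (ddf_le z); pose proof (pow2_ge_0 (y - x)).
  replace (INR _) with 2 by (simpl; ring). nra.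
Qed.

Lemma quadratic_upper_bound (f df ddf : R -> R) L x y :
  (forall t, is_derive f t (df t)) -> (forall t, is_derive df t (ddf t)) ->
  (forall t, ddf t <= L) ->
  f y <= f x + df x * (y - x) + L / 2 * (y - x) ^ 2.
Proof.
  intros Df Ddf ddf_le.
  destruct (Rtotal_order x y) as [Hxy | [-> | Hyx]].
  - now apply (quadratic_upper_bound_lt f df ddf L).
  - lra.
  - (* reflect through t |-> -t to reduce to the case x < y *)
    assert (Dreflect : forall (g dg : R -> R) t, is_derive g (- t) (dg (- t)) ->
        is_derive (fun s => g (- s)) t (- dg (- t))).
    { intros g dg t Dg.
      replace (- dg (- t)) with (scal (-1) (dg (- t)))
        by (unfold scal; simpl; unfold mult; simpl; ring).
      apply (is_derive_comp g Ropp t); [exact Dg | auto_derive; auto; ring]. }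
    assert (Ddf' : forall t, is_derive (fun s => - df (- s)) t (ddf (- t))).
    { intro t; rewrite <- (Ropp_involutive (ddf (- t))).
      apply (Dreflect (fun s => - df s) (fun s => - ddf s)), (is_derive_opp df), Ddf. }
    pose proof (quadratic_upper_bound_lt (fun s => f (- s)) (fun s => - df (- s))
      (fun s => ddf (- s)) L (- x) (- y) (fun t => Dreflect f df t (Df _)) Ddf'
      (fun t => ddf_le _) ltac:(lra)) as B.
    cbv beta in B; rewrite !Ropp_involutive in B.
    nra.
Qed.

Section Bern.
Variable delta : R.
Hypothesis Hdelta : 0 < delta.

Definition dg_delta (t : R) : R :=
  / (8 * delta ^ 3) * ((1 - t + delta) ^ 2 * (2 * (1 - t) - 4 * delta)).

Definition ddg_delta (t : R) : R :=
  / (8 * delta ^ 3) * (6 * (delta + (1 - t)) * (delta - (1 - t))).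

Definition dBern : R -> R :=
  piecewise3 (1 - delta) (1 + delta) (fun _ => -1) dg_delta (fun _ => 0).

Definition ddBern : R -> R :=
  piecewise3 (1 - delta) (1 + delta) (fun _ => 0) ddg_delta (fun _ => 0).

Lemma Bern_piecewise3 t :
  Bern delta t =
  piecewise3 (1 - delta) (1 + delta) (fun s => 1 - s) (g_delta delta) (fun _ => 0) t.
Proof.
  unfold Bern, piecewise3, Rabs.
  destruct Rcase_abs, Rle_dec, Rlt_dec; try destruct Rle_dec; try lra;
    apply Rmax_left || apply Rmax_right; lra.
Qed.

Lemma Bern_is_derive_dBern t : is_derive (Bern delta) t (dBern t).
Proof.
  apply (is_derive_ext _ _ _ _ (fun s => eq_sym (Bern_piecewise3 s))).
  apply is_derive_piecewise3; unfold g_delta, dg_delta; try lra;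
    [intro; auto_derive; auto; ring | intro; auto_derive; auto; field; lra
    | intro; auto_derive; auto | ..]; field; lra.
Qed.

Lemma dBern_is_derive t : is_derive dBern t (ddBern t).
Proof.
  apply is_derive_piecewise3; unfold dg_delta, ddg_delta; try lra;
    [intro; auto_derive; auto | intro; auto_derive; auto; field; lra
    | intro; auto_derive; auto | ..]; field; lra.
Qed.

Lemma ddBern_le t : ddBern t <= 3 / (4 * delta).
Proof.
  unfold ddBern, piecewise3, ddg_delta.
  assert (0 < 3 / (4 * delta)) by (apply Rdiv_lt_0_compat; lra).
  destruct Rlt_dec; [lra|]; destruct Rle_dec; [|lra].
  replace (/ (8 * delta ^ 3) * (6 * (delta + (1 - t)) * (delta - (1 - t))))
    with (3 / (4 * delta) - (1 - t) ^ 2 * (3 / (4 * delta ^ 3))) by (field; lra).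
  assert (0 < 3 / (4 * delta ^ 3))
    by (apply Rdiv_lt_0_compat; [|apply Rmult_lt_0_compat, pow_lt]; lra).
  pose proof (pow2_ge_0 (1 - t)); nra.
Qed.

Lemma Bern'_dBern t : Bern' delta t = dBern t.
Proof. apply is_derive_unique, Bern_is_derive_dBern. Qed.

Lemma Bern_quadratic_upper_bound u h :
  Bern delta (u + h) <= Bern delta u + Bern' delta u * h + 3 / (4 * delta) / 2 * h ^ 2.
Proof.
  rewrite Bern'_dBern.
  pose proof (quadratic_upper_bound (Bern delta) dBern ddBern (3 / (4 * delta)) u (u + h)
    Bern_is_derive_dBern dBern_is_derive ddBern_le) as B.
  now replace (u + h - u) with h in B by ring.
Qed.

End Bern.

Lemma sumR_ext n f g : (forall i, (i < n)%nat -> f i = g i) -> sumR n f = sumR n g.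
Proof. induction n as [|n IH]; simpl; intros H; auto. rewrite IH, H; auto. Qed.

Lemma sumR_le n f g : (forall i, (i < n)%nat -> f i <= g i) -> sumR n f <= sumR n g.
Proof.
  induction n as [|n IH]; simpl; intros H; [lra|].
  pose proof (H n (Nat.lt_succ_diag_r n)).
  pose proof (IH (fun i Hi => H i (Nat.lt_lt_succ_r _ _ Hi))).
  lra.
Qed.

Lemma sumR_plus n f g : sumR n (fun i => f i + g i) = sumR n f + sumR n g.
Proof. induction n as [|n IH]; simpl; [|rewrite IH]; ring. Qed.

Lemma sumR_mult_r n f c : sumR n (fun i => f i * c) = sumR n f * c.
Proof. induction n as [|n IH]; simpl; [|rewrite IH]; ring. Qed.

Lemma mean_quadratic_upper_bound (f df : R -> R) L n (u a : nat -> R) d :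
  (0 < n)%nat ->
  (forall v h, f (v + h) <= f v + df v * h + L / 2 * h ^ 2) ->
  sumR n (fun i => a i ^ 2) / INR n = 1 ->
  sumR n (fun i => f (u i + a i * d)) / INR n <=
  sumR n (fun i => f (u i)) / INR n + sumR n (fun i => df (u i) * a i) / INR n * d
  + L / 2 * d ^ 2.
Proof.
  intros Hn Hf Ha.
  assert (HN : 0 < INR n) by (apply lt_0_INR; lia).
  assert (S : sumR n (fun i => f (u i + a i * d)) <= sumR n (fun i =>
    f (u i) + df (u i) * a i * d + a i ^ 2 * (L / 2 * d ^ 2))).
  { apply sumR_le; intros i _.
    replace (a i ^ 2 * (L / 2 * d ^ 2)) with (L / 2 * (a i * d) ^ 2) by ring.
    rewrite Rmult_assoc; apply Hf. }
  rewrite !sumR_plus, !sumR_mult_r in S.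
  replace (sumR n (fun i => a i ^ 2)) with (INR n) in S
    by (rewrite <- (Rmult_1_l (INR n)), <- Ha; field; lra).
  apply (Rmult_le_reg_r (INR n)); [exact HN|].
  replace (_ / INR n * INR n) with (sumR n (fun i => f (u i + a i * d))) by (field; lra).
  apply (Rle_trans _ _ _ S), Req_le; field; lra.
Qed.

Theorem proposition4
  (delta : R) (n p : nat) (x : nat -> nat -> R) (y : nat -> R)
  (beta0t : R) (betat : nat -> R) (j : nat) (P : R -> R) (bj : R) :
  0 < delta ->
  (0 < n)%nat ->
  (j < p)%nat ->
  (forall i, (i < n)%nat -> y i = 1 \/ y i = -1) ->
  (forall k, (k < p)%nat -> sumR n (fun i => x i k) / INR n = 0) ->
  (forall k, (k < p)%nat -> sumR n (fun i => (x i k) ^ 2) / INR n = 1) ->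
  let L := 3 / (4 * delta) in
  let Lt := (1 + eps_L) * L in
  let r := fun i => y i * (beta0t + sumR p (fun k => x i k * betat k)) in
  let F := fun b =>
    sumR n (fun i => Bern delta (r i + y i * x i j * (b - betat j))) / INR n
    + P b in
  let Q := fun b =>
    sumR n (fun i => Bern delta (r i)) / INR n
    + sumR n (fun i => Bern' delta (r i) * y i * x i j * (b - betat j)) / INR n
    + Lt / 2 * (b - betat j) ^ 2 + P b in
  (bj = betat j -> F bj = Q bj) /\ (bj <> betat j -> F bj < Q bj).
Proof.
  intros Hdelta Hn Hj Hy _ Hx2 L Lt r F Q.
  assert (HN : 0 < INR n) by (apply lt_0_INR; lia).
  unfold F, Q; rewrite sumR_mult_r.
  split; intro Hb.
  - rewrite Hb, Rminus_diag.
    rewrite (sumR_ext n _ (fun i => Bern delta (r i))) by (intros; f_equal; ring).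
    field; lra.
  - assert (Hyx2 : sumR n (fun i => (y i * x i j) ^ 2) / INR n = 1).
    { rewrite <- (Hx2 j Hj); f_equal; apply sumR_ext; intros i Hi.
      destruct (Hy i Hi) as [-> | ->]; ring. }
    pose proof (mean_quadratic_upper_bound (Bern delta) (Bern' delta) L n r
      (fun i => y i * x i j) (bj - betat j) Hn
      (Bern_quadratic_upper_bound delta Hdelta) Hyx2) as B; cbv beta in B.
    rewrite (sumR_ext n (fun i => Bern' delta (r i) * (y i * x i j))
      (fun i => Bern' delta (r i) * y i * x i j)) in B by (intros; ring).
    assert (0 < (bj - betat j) ^ 2) by (apply pow2_gt_0; lra).
    assert (0 < L) by (apply Rdiv_lt_0_compat; lra).
    assert (L < Lt) by (unfold Lt, eps_L; lra).
    nra.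
Qed.
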